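(* Let $(E,\mathcal{I})$ be the partition matroid given by a partition $E_1,\dots,E_b$ of $E$ and integers $k_z$ with $2\le k_z\le|E_z|$, and let $\gamma=\min_{z\in[b]}\lfloor k_z/2\rfloor/k_z$. Suppose $f:2^E\times O^E\to\mathbb{R}_{\ge0}$ is worst-case monotone, worst-case submodular and adaptive submodular with respect to $p(\phi)$, and satisfies minimal dependency. Then the adaptive hybrid policy $\pi^m=\pi^{mw}@\pi^{ma}$ has robustness ratio $\alpha(\pi^m)\ge\frac{\gamma}{\gamma+1}$ (i.e. $f_{wc}(\pi^m)\ge\frac{\gamma}{\gamma+1}f_{wc}(\pi^*_{wc})$ and $f_{avg}(\pi^m)\ge\frac{\gamma}{\gamma+1}f_{avg}(\pi^*_{avg})$).
   Context: Setting. $E$ is a finite set of $n$ items and $O$ a finite set of states. A realization is a function $\phi:E\to O$; $p$ is a probability distribution (prior) on the set of all realizations, $\Phi$ denotes a random realization with law $p$, and $U^+=\{\phi: p(\phi)>0\}$. A partial realization is a function $\psi:S\to O$ with $S\subseteq E$, $\mathrm{dom}(\psi)=S$; it is identified with the set of pairs $\{(e,\psi(e)):e\in S\}$, so $\psi\subseteq\psi'$ means $\mathrm{dom}(\psi)\subseteq\mathrm{dom}(\psi')$ and they agree on $\mathrm{dom}(\psi)$. A realization $\phi$ is consistent with $\psi$, written $\phi\sim\psi$, if it agrees with $\psi$ on $\mathrm{dom}(\psi)$. Only partial realizations with $\Pr[\Phi\sim\psi]>0$ are considered, and $p(\phi\mid\psi)=\Pr[\Phi=\phi\mid\Phi\sim\psi]$.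 For $S\subseteq E$ and a partial realization $\psi$, $f(S,\psi)=\mathbb{E}[f(S,\Phi)\mid\Phi\sim\psi]$. For $e\notin\mathrm{dom}(\psi)$, let $O(e,\psi)=\{o\in O:\exists\phi\text{ with }p(\phi\mid\psi)>0,\ \phi(e)=o\}$ and define the worst-case marginal utility $f_{wc}(e\mid\psi)=\min_{o\in O(e,\psi)}\{f(\mathrm{dom}(\psi)\cup\{e\},\psi\cup\{(e,o)\})-f(\mathrm{dom}(\psi),\psi)\}$ and the expected marginal utility $f_{avg}(e\mid\psi)=\mathbb{E}[f(\mathrm{dom}(\psi)\cup\{e\},\Phi)-f(\mathrm{dom}(\psi),\Phi)\mid\Phi\sim\psi]$. $f$ is worst-case submodular if $f_{wc}(e\mid\psi)\ge f_{wc}(e\mid\psi')$ for all partial realizations $\psi\subseteq\psi'$ and all $e\in E\setminus\mathrm{dom}(\psi')$; it is worst-case monotone if $f_{wc}(e\mid\psi)\ge0$ for all $\psi$ and $e\notin\mathrm{dom}(\psi)$. $f$ is adaptive submodular if $f_{avg}(e\mid\psi)\ge f_{avg}(e\mid\psi')$ for all $\psi\subseteq\psi'$ and $e\in E\setminus\mathrm{dom}(\psi')$, and adaptive monotone if $f_{avg}(e\mid\psi)\ge0$ always. $f$ satisfies minimal dependency if $f(\mathrm{dom}(\psi),\psi)=f(\mathrm{dom}(\psi),\phi)$ for every partial realization $\psi$ and every $\phi\in U^+$ with $\phi\sim\psi$. Policies. A (deterministic) policy $\pi$ is a rule which, given the current observation (the partial realization of the items selected so far), either selects a new item or stops; after an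 item $e$ is selected under realization $\phi$, the state $\phi(e)$ is observed. $E(\pi,\phi)$ is the set of items selected by $\pi$ under $\phi$. $f_{avg}(\pi)=\mathbb{E}[f(E(\pi,\Phi),\Phi)]$ and $f_{wc}(\pi)=\min_{\phi\in U^+}f(E(\pi,\phi),\phi)$. The concatenation $\pi@\pi'$ runs $\pi$ and then runs $\pi'$ from scratch, ignoring the observations obtained by $\pi$; its selected set is the union of the two. $\pi^*_{wc}$ (resp. $\pi^*_{avg}$) maximizes $f_{wc}(\pi)$ (resp. $f_{avg}(\pi)$) over policies with $E(\pi,\phi)\in\mathcal{I}$ for all $\phi\in U^+$; the robustness ratio is $\alpha(\pi)=\min\{f_{wc}(\pi)/f_{wc}(\pi^*_{wc}),\ f_{avg}(\pi)/f_{avg}(\pi^*_{avg})\}$. Partition matroid: $\mathcal{I}=\{I\subseteq E:|I\cap E_z|\le k_z\ \forall z\in[b]\}$. Policy $\pi^{mw}$: starting from the empty observation $\psi=\emptyset$, for $z=1,\dots,b$ in turn, perform $\lfloor k_z/2\rfloor$ iterations, each selecting $e\in\arg\max_{e\in E_z\setminus\mathrm{dom}(\psi)}f_{wc}(e\mid\psi)$ for the current observation $\psi$, observing $\Phi(e)$ and adding $(e,\Phi(e))$ to $\psi$. Policy $\pi^{ma}$: identical except that each meta-round $z$ performs $\lceil k_z/2\rceil$ iterations and uses $f_{avg}(e\mid\psi)$ in place of $f_{wc}(e\mid\psi)$. Ties are broken arbitrarily. $\pi^m=\pi^{mw}@\pi^{ma}$. *)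

From HB Require Import structures.
From mathcomp Require Import all_boot all_order all_algebra.
From mathcomp Require Import reals.
Set Implicit Arguments. Unset Strict Implicit. Unset Printing Implicit Defensive.
Import Order.TTheory GRing.Theory Num.Theory.
Local Open Scope ring_scope.

Section Adaptive.
Variables (R : realType) (E O : finType).
(* realizations phi : E -> O; partial realizations psi : E -> option O,
   with dom psi = {e | psi e <> None} *)
Variable p : {ffun E -> O} -> R.
Variable f : {set E} -> {ffun E -> O} -> R.

Definition pdom (psi : {ffun E -> option O}) : {set E} :=
  [set e | psi e != None].

Definition consistent (phi : {ffun E -> O}) (psi : {ffun E -> option O}) : bool :=
  [forall e, (psi e != None) ==> (psi e == Some (phi e))].

Definition subpr (psi psi' : {ffun E -> option O}) : bool :=
  [forall e, (psi e != None) ==> (psi' e == psi e)].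

Definition prob (psi : {ffun E -> option O}) : R :=
  \sum_(phi | consistent phi psi) p phi.

Definition condp (phi : {ffun E -> O}) (psi : {ffun E -> option O}) : R :=
  if consistent phi psi then p phi / prob psi else 0.

Definition fexp (S : {set E}) (psi : {ffun E -> option O}) : R :=
  \sum_phi condp phi psi * f S phi.

Definition extend (psi : {ffun E -> option O}) (e : E) (o : O)
  : {ffun E -> option O} :=
  [ffun x => if x == e then Some o else psi x].

Definition Oset (e : E) (psi : {ffun E -> option O}) : {set O} :=
  [set o | [exists phi, (0 < condp phi psi) && (phi e == o)]].

(* minimum of F over a finite set A (0 if A is empty; only used on nonempty A) *)
Definition min_over (T : finType) (A : {set T}) (F : T -> R) : R :=
  match [pick x in A] with
  | Some x0 => \big[Num.min/F x0]_(x in A) F x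
  | None => 0
  end.

Definition fwc_marg (e : E) (psi : {ffun E -> option O}) : R :=
  min_over (Oset e psi)
    (fun o => fexp (pdom psi :|: [set e]) (extend psi e o) - fexp (pdom psi) psi).

Definition favg_marg (e : E) (psi : {ffun E -> option O}) : R :=
  \sum_phi condp phi psi * (f (pdom psi :|: [set e]) phi - f (pdom psi) phi).

Definition is_prior : Prop :=
  (forall phi, 0 <= p phi) /\ \sum_phi p phi = 1.

Definition wc_monotone : Prop :=
  forall psi e, 0 < prob psi -> e \notin pdom psi -> 0 <= fwc_marg e psi.

Definition wc_submodular : Prop :=
  forall psi psi' e, 0 < prob psi -> 0 < prob psi' -> subpr psi psi' ->
    e \notin pdom psi' -> fwc_marg e psi' <= fwc_marg e psi.

Definition adaptive_submodular : Prop :=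
  forall psi psi' e, 0 < prob psi -> 0 < prob psi' -> subpr psi psi' ->
    e \notin pdom psi' -> favg_marg e psi' <= favg_marg e psi.

Definition minimal_dependency : Prop :=
  forall psi phi, 0 < prob psi -> 0 < p phi -> consistent phi psi ->
    fexp (pdom psi) psi = f (pdom psi) phi.

(* A deterministic policy: given the current observation, select an item
   (Some e) or stop (None).  Selecting an already observed item is a stop. *)
Definition policy := {ffun E -> option O} -> option E.

Definition empty_obs : {ffun E -> option O} := [ffun => None].

Definition pstep (pi : policy) (phi : {ffun E -> O}) (psi : {ffun E -> option O})
  : {ffun E -> option O} :=
  match pi psi with Some e => extend psi e (phi e) | None => psi end.

Definition obs_after (pi : policy) (phi : {ffun E -> O}) (t : nat) :=
  iter t (pstep pi phi) empty_obs.

(* E(pi, phi): at most #|E| effective steps are possible *)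
Definition selected (pi : policy) (phi : {ffun E -> O}) : {set E} :=
  pdom (obs_after pi phi #|E|).

Definition avg_value (X : {ffun E -> O} -> {set E}) : R :=
  \sum_phi p phi * f (X phi) phi.

Definition wc_value (X : {ffun E -> O} -> {set E}) : R :=
  min_over [set phi | 0 < p phi] (fun phi => f (X phi) phi).

(* pi@pi' : selected set is the union *)
Definition concat_selected (pi1 pi2 : policy) (phi : {ffun E -> O}) : {set E} :=
  selected pi1 phi :|: selected pi2 phi.

Section Partition.
Variables (b : nat) (Ez : 'I_b -> {set E}) (k : 'I_b -> nat).

Definition in_matroid (S : {set E}) : bool :=
  [forall z, #|S :&: Ez z| <= k z]%N.

Definition feasible (pi : policy) : Prop :=
  forall phi, 0 < p phi -> in_matroid (selected pi phi).

Definition schedule (c : 'I_b -> nat) : seq 'I_b :=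
  flatten [seq nseq (c z) z | z <- enum 'I_b].

(* pi runs the meta-round greedy rule with score function `score`,
   with ties broken arbitrarily (as a function of the observation). *)
Definition greedy_policy (c : 'I_b -> nat) (score : E -> {ffun E -> option O} -> R)
    (pi : policy) : Prop :=
  forall phi, 0 < p phi ->
    (forall (z0 : 'I_b) (t : nat), (t < size (schedule c))%N ->
      let z := nth z0 (schedule c) t in
      let psi := obs_after pi phi t in
      exists2 e, pi psi = Some e &
        [/\ e \in Ez z, e \notin pdom psi &
            forall e', e' \in Ez z -> e' \notin pdom psi -> score e' psi <= score e psi])
    /\ pi (obs_after pi phi (size (schedule c))) = None.

Definition is_pi_mw (pi : policy) : Prop :=
  greedy_policy (fun z => (k z)./2) fwc_marg pi.

Definition is_pi_ma (pi : policy) : Prop :=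
  greedy_policy (fun z => uphalf (k z)) favg_marg pi.

End Partition.
End Adaptive.

(* gamma = min_z floor(k_z/2)/k_z  (b > 0; all terms are <= 1/2 < 1) *)
Definition gamma (R : realType) (b : nat) (k : 'I_b -> nat) : R :=
  \big[Num.min/1]_(z < b) (((k z)./2)%:R / (k z)%:R).

From mathcomp Require Import all_boot all_order all_algebra.
From mathcomp Require Import reals.
Import Order.TTheory GRing.Theory Num.Theory.
Local Open Scope ring_scope.
Set Implicit Arguments. Unset Strict Implicit. Unset Printing Implicit Defensive.

(* Both halves of pi^m are meta-round greedy runs, and one counting argument
   serves both (greedy_ratio): if round z lasts c_z >= gamma * k_z steps and the
   score of an item only decreases as observations grow (worst-case resp.
   adaptive submodularity), then for every independent set A of items not in
   the final greedy observation G,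
       gamma * sum_{e in A} score(e | G) <= sum of the greedy scores.
   - Worst case (WorstCaseGreedy): an adversary answers the queries of any
     feasible competitor with worst outcomes given G (section Adversary), so its
     worst-case value is at most f(G) + sum_A f_wc(e | G); by minimal dependency
     the greedy scores add up to at most f(G).
   - Average case (AverageGreedy): by the tower property and adaptive
     submodularity the competitor's expected value is at most
     E f(G) + E sum_A f_avg(e | G) (section AverageCompetitor), while the
     expected greedy scores add up to at most E f(G).
   In both cases gamma * OPT <= (gamma + 1) * f(G); monotonicity of f transfers
   this to the concatenation, which gives the ratio gamma / (gamma + 1). *)

Lemma schedule_count b (c : 'I_b -> nat) (z z0 : 'I_b) :
  #|[pred t : 'I_(size (schedule c)) | nth z0 (schedule c) t == z]| = c z.
Proof.
rewrite -sum1_card.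
transitivity (\sum_(0 <= t < size (schedule c) | nth z0 (schedule c) t == z) 1)%N.
  by rewrite big_mkord; apply: eq_bigl.
rewrite -(big_nth z0 (fun x => x == z) (fun _ => 1%N)) sum1_count.
rewrite /schedule count_flatten -map_comp.
rewrite (eq_map (g := fun z' => ((z' == z) * c z')%N)); last first.
  by move=> z' /=; rewrite count_nseq.
rewrite sumnE big_map big_enum /= (bigD1 z) //= eqxx mul1n big1 ?addn0 //.
by move=> i /negbTE ->.
Qed.

Section Observations.
Variables E O : finType.
Local Notation Real := {ffun E -> O}.
Local Notation Obs := {ffun E -> option O}.

Lemma consistentP (phi : Real) (psi : Obs) :
  reflect (forall e o, psi e = Some o -> phi e = o) (consistent phi psi).
Proof.
apply: (iffP forallP) => [agree e o psi_e|agree e].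
  by move: (agree e); rewrite psi_e /= => /eqP [].
by apply/implyP; case psi_e: (psi e) => [o|] //= _; rewrite (agree e o psi_e).
Qed.

Lemma subprP (psi psi' : Obs) :
  reflect (forall e o, psi e = Some o -> psi' e = Some o) (subpr psi psi').
Proof.
apply: (iffP forallP) => [agree e o psi_e|agree e].
  by move: (agree e); rewrite psi_e /= => /eqP ->.
by apply/implyP; case psi_e: (psi e) => [o|] //= _; rewrite (agree e o psi_e).
Qed.

Lemma in_pdom (psi : Obs) e : (e \in pdom psi) = (psi e != None).
Proof. by rewrite inE. Qed.

Lemma pdom_empty : pdom (empty_obs E O) = set0.
Proof. by apply/setP => x; rewrite !inE ffunE. Qed.

Lemma subpr_refl (psi : Obs) : subpr psi psi.
Proof. by apply/subprP. Qed.

Lemma subpr_trans (psi1 psi2 psi3 : Obs) :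
  subpr psi1 psi2 -> subpr psi2 psi3 -> subpr psi1 psi3.
Proof. by move=> /subprP sub12 /subprP sub23; apply/subprP => e o /sub12 /sub23. Qed.

Lemma empty_subpr (psi : Obs) : subpr (empty_obs E O) psi.
Proof. by apply/subprP => e o; rewrite ffunE. Qed.

Lemma consistent_subpr phi (psi psi' : Obs) :
  subpr psi psi' -> consistent phi psi' -> consistent phi psi.
Proof. by move=> /subprP sub /consistentP cons; apply/consistentP => e o /sub /cons. Qed.

Lemma subpr_pdom (psi psi' : Obs) : subpr psi psi' -> pdom psi \subset pdom psi'.
Proof.
move=> /subprP sub; apply/subsetP => e; rewrite !in_pdom.
by case psi_e: (psi e) => [o|] //= _; rewrite (sub e o psi_e).
Qed.

Lemma pdom_extend (psi : Obs) e o : pdom (extend psi e o) = pdom psi :|: [set e].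
Proof. by apply/setP => x; rewrite !inE ffunE; case: (x == e); rewrite ?orbT ?orbF. Qed.

Lemma extend_observed (psi : Obs) e o : psi e = Some o -> extend psi e o = psi.
Proof. by move=> psi_e; apply/ffunP => x; rewrite ffunE; case: eqP => // ->. Qed.

Lemma subpr_extend (psi : Obs) e o : e \notin pdom psi -> subpr psi (extend psi e o).
Proof.
rewrite in_pdom negbK => /eqP psi_e; apply/subprP => x o' psi_x; rewrite ffunE.
by case: eqP => // x_e; rewrite x_e psi_e in psi_x.
Qed.

Lemma subpr_extend2 (psi psi' : Obs) e o :
  subpr psi psi' -> subpr (extend psi e o) (extend psi' e o).
Proof.
by move=> /subprP sub; apply/subprP => x o'; rewrite !ffunE; case: eqP => // _; apply: sub.
Qed.

Lemma consistent_extend phi (psi : Obs) e :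
  consistent phi psi -> consistent phi (extend psi e (phi e)).
Proof.
move=> /consistentP cons; apply/consistentP => x o; rewrite ffunE.
by case: eqP => [-> [] | _ /cons].
Qed.

Lemma consistent_extend_val phi (psi : Obs) e o :
  consistent phi (extend psi e o) -> phi e = o.
Proof. by move=> /consistentP cons; apply: cons; rewrite ffunE eqxx. Qed.

Lemma consistent_extend_inv phi phi' (psi : Obs) e :
  consistent phi psi -> consistent phi' (extend psi e (phi e)) ->
  consistent phi' psi /\ phi' e = phi e.
Proof.
move=> /consistentP cons /consistentP cons'.
split; last by apply: cons'; rewrite ffunE eqxx.
apply/consistentP => x o psi_x; case: (eqVneq x e) => [x_e|x_ne].
  by rewrite x_e in psi_x *; rewrite (cons' e (phi e)) ?ffunE ?eqxx //; apply: cons.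
by apply: cons'; rewrite ffunE (negbTE x_ne).
Qed.

Definition restrict (phi : Real) (S : {set E}) : Obs :=
  [ffun x => if x \in S then Some (phi x) else None].

Lemma pdom_restrict phi S : pdom (restrict phi S) = S.
Proof. by apply/setP => x; rewrite !inE ffunE; case: (x \in S). Qed.

Lemma consistent_restrict phi S : consistent phi (restrict phi S).
Proof. by apply/consistentP => x o; rewrite ffunE; case: (x \in S) => // [[]]. Qed.

(* The union of two observations (the first one wins on conflicts, which never
   occur for observations of the same realization). *)
Definition join (psi psi' : Obs) : Obs :=
  [ffun x => if psi x is Some o then Some o else psi' x].

Lemma pdom_join psi psi' : pdom (join psi psi') = pdom psi :|: pdom psi'.
Proof. by apply/setP => x; rewrite !inE ffunE; case: (psi x). Qed.

Lemma subpr_join psi psi' : subpr psi (join psi psi').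
Proof. by apply/subprP => x o psi_x; rewrite ffunE psi_x. Qed.

Lemma consistent_join phi psi psi' :
  consistent phi psi -> consistent phi psi' -> consistent phi (join psi psi').
Proof.
move=> /consistentP cons /consistentP cons'; apply/consistentP => x o; rewrite ffunE.
by case psi_x: (psi x) => [o'|]; [move=> [<-]; apply: cons | apply: cons'].
Qed.

Lemma consistent_join_inv phi phi' psi psi' :
  consistent phi psi -> consistent phi psi' ->
  consistent phi' (join psi psi') -> consistent phi' psi /\ consistent phi' psi'.
Proof.
move=> /consistentP cons /consistentP cons' /consistentP consJ.
split; apply/consistentP => x o psi_x; first by apply: consJ; rewrite ffunE psi_x.
apply: consJ; rewrite ffunE; case psi_x': (psi x) => [o'|] //.
by rewrite -(cons _ _ psi_x') -(cons' _ _ psi_x).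
Qed.

Definition oset (oe : option E) : {set E} := if oe is Some e then [set e] else set0.

Lemma obs_afterS (pi : policy E O) phi t :
  obs_after pi phi t.+1 = pstep pi phi (obs_after pi phi t).
Proof. by []. Qed.

Lemma pdom_pstep (pi : policy E O) phi psi :
  pdom (pstep pi phi psi) = pdom psi :|: oset (pi psi).
Proof. by rewrite /pstep; case: (pi psi) => [e|] /=; rewrite ?pdom_extend ?setU0. Qed.

Lemma obs_consistent (pi : policy E O) phi t : consistent phi (obs_after pi phi t).
Proof.
elim: t => [|t IH]; first by apply/consistentP => e o; rewrite ffunE.
by rewrite obs_afterS /pstep; case: (pi _) => // e; apply: consistent_extend.
Qed.

Lemma subpr_pstep (pi : policy E O) phi psi :
  consistent phi psi -> subpr psi (pstep pi phi psi).
Proof.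
move=> /consistentP cons; rewrite /pstep; case: (pi psi) => [e|]; last exact: subpr_refl.
case: (boolP (e \in pdom psi)) => e_obs; last exact: subpr_extend.
move: e_obs; rewrite in_pdom; case psi_e: (psi e) => [o|] // _.
by rewrite (cons _ _ psi_e) extend_observed ?subpr_refl // (cons _ _ psi_e).
Qed.

Lemma obs_after_mono (pi : policy E O) phi t t' : (t <= t')%N ->
  subpr (obs_after pi phi t) (obs_after pi phi t').
Proof.
move=> /subnK <-; elim: (t' - t)%N => [|n IH]; first exact: subpr_refl.
apply: subpr_trans IH _; rewrite addSn obs_afterS; apply: subpr_pstep.
exact: obs_consistent.
Qed.

Lemma obs_after_determined (pi : policy E O) phi phi' t :
  consistent phi' (obs_after pi phi t) -> obs_after pi phi' t = obs_after pi phi t.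
Proof.
elim: t => [|t IH] //; rewrite !obs_afterS => cons.
have cons0 : consistent phi' (obs_after pi phi t).
  by apply: consistent_subpr cons; apply: subpr_pstep; apply: obs_consistent.
rewrite (IH cons0); move: cons; rewrite /pstep; case: (pi _) => // e cons.
by have [_ ->] := consistent_extend_inv (obs_consistent pi phi t) cons.
Qed.

End Observations.

Section MinOver.
Variables (R : realType) (U : finType) (A : {set U}) (F : U -> R).

Lemma min_over_le x : x \in A -> min_over A F <= F x.
Proof.
move=> Ax; rewrite /min_over; case: pickP => [x0 _|A0]; last by rewrite A0 in Ax.
by rewrite (bigD1 x) //= ge_min lexx.
Qed.

Lemma min_over_attained x : x \in A -> exists2 y, y \in A & min_over A F = F y.
Proof.
move=> Ax; rewrite /min_over; case: pickP => [x0 Ax0|A0]; last by rewrite A0 in Ax.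
apply: (big_ind (fun v => exists2 y, y \in A & v = F y)); first by exists x0.
  by move=> _ _ [y1 A1 ->] [y2 A2 ->]; rewrite minEle; case: ifP; [exists y1|exists y2].
by move=> y Ay; exists y.
Qed.

Lemma min_over_ge v x : x \in A -> (forall y, y \in A -> v <= F y) -> v <= min_over A F.
Proof. by move=> Ax lb; have [y Ay ->] := min_over_attained Ax; apply: lb. Qed.

End MinOver.

Section Prior.
Variables (R : realType) (E O : finType) (p : {ffun E -> O} -> R).
Hypothesis p_ge0 : forall phi, 0 <= p phi.
Local Notation Real := {ffun E -> O}.
Local Notation Obs := {ffun E -> option O}.

Lemma p_cases phi : p phi = 0 \/ 0 < p phi.
Proof. by rewrite lt_def p_ge0 andbT; case: eqP; [left|right]. Qed.

Lemma prob_ge0 (psi : Obs) : 0 <= prob p psi.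
Proof. by apply: sumr_ge0. Qed.

Lemma prob_gt0 phi (psi : Obs) : consistent phi psi -> 0 < p phi -> 0 < prob p psi.
Proof.
move=> cons pos; apply: lt_le_trans pos _.
by rewrite /prob (bigD1 phi) //= lerDl sumr_ge0.
Qed.

Lemma prob_gt0_witness (psi : Obs) :
  0 < prob p psi -> exists phi, consistent phi psi /\ 0 < p phi.
Proof.
move=> pos; case: (boolP [exists phi, consistent phi psi && (0 < p phi)]).
  by move=> /existsP [phi /andP [cons phi_pos]]; exists phi.
move=> /existsPn none; move: pos; rewrite /prob big1 ?ltxx // => phi cons.
by case: (p_cases phi) => // phi_pos; move: (none phi); rewrite cons phi_pos.
Qed.

Lemma condp_ge0 phi (psi : Obs) : 0 <= condp p phi psi.
Proof. by rewrite /condp; case: ifP => // _; rewrite divr_ge0 ?prob_ge0. Qed.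

Lemma condp_gt0 phi (psi : Obs) : consistent phi psi -> 0 < p phi -> 0 < condp p phi psi.
Proof. by move=> cons pos; rewrite /condp cons divr_gt0 // (prob_gt0 cons). Qed.

Lemma condp_support phi (psi : Obs) :
  condp p phi psi != 0 -> consistent phi psi /\ 0 < p phi.
Proof.
rewrite /condp; case: ifP => cons; last by rewrite eqxx.
by rewrite mulf_eq0 negb_or lt_def p_ge0 andbT => /andP [].
Qed.

Lemma Oset_mem phi (psi : Obs) e :
  consistent phi psi -> 0 < p phi -> phi e \in Oset p e psi.
Proof.
by move=> cons pos; rewrite inE; apply/existsP; exists phi; rewrite condp_gt0 ?eqxx.
Qed.

Lemma Oset_witness (psi : Obs) e o : o \in Oset p e psi ->
  exists phi, [/\ consistent phi psi, 0 < p phi & phi e = o].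
Proof.
rewrite inE => /existsP [phi /andP [/lt0r_neq0 /condp_support [cons pos] /eqP <-]].
by exists phi.
Qed.

Definition Ep (X : Real -> R) : R := \sum_phi p phi * X phi.

Lemma Ep_le (X Y : Real -> R) :
  (forall phi, 0 < p phi -> X phi <= Y phi) -> Ep X <= Ep Y.
Proof.
move=> le_XY; apply: ler_sum => phi _.
by case: (p_cases phi) => pos; rewrite ?pos ?mul0r // ler_wpM2l ?le_XY.
Qed.

Lemma Ep_eq (X Y : Real -> R) :
  (forall phi, 0 < p phi -> X phi = Y phi) -> Ep X = Ep Y.
Proof.
move=> eq_XY; apply: eq_bigr => phi _.
by case: (p_cases phi) => pos; rewrite ?pos ?mul0r // eq_XY.
Qed.

Lemma EpD (X Y : Real -> R) : Ep (fun phi => X phi + Y phi) = Ep X + Ep Y.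
Proof. by rewrite /Ep -big_split; apply: eq_bigr => phi _; rewrite mulrDr. Qed.

Lemma EpZ a (X : Real -> R) : Ep (fun phi => a * X phi) = a * Ep X.
Proof. by rewrite /Ep mulr_sumr; apply: eq_bigr => phi _; rewrite mulrCA. Qed.

Lemma Ep_sum n (X : Real -> nat -> R) :
  Ep (fun phi => \sum_(t < n) X phi t) = \sum_(t < n) Ep (fun phi => X phi t).
Proof. by rewrite /Ep exchange_big; apply: eq_bigr => phi _; rewrite mulr_sumr. Qed.

Lemma Ep_telescope (F : Real -> nat -> R) n :
  Ep (fun phi => F phi n - F phi 0%N) = \sum_(i < n) Ep (fun phi => F phi i.+1 - F phi i).
Proof.
rewrite /Ep exchange_big /=; apply: eq_bigr => phi _; rewrite -mulr_sumr.
by rewrite -(big_mkord xpredT (fun i => F phi i.+1 - F phi i)) telescope_sumr.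
Qed.

(* Let [Psi phi] be an observation of [phi] that is determined
   by itself: every realization consistent with it yields the same observation
   (e.g. the observation made by a policy at a fixed time). *)
Section Tower.
Variable Psi : Real -> Obs.
Hypothesis Psi_determined : forall phi phi', 0 < p phi -> 0 < p phi' ->
  consistent phi' (Psi phi) -> Psi phi' = Psi phi.
Hypothesis Psi_consistent : forall phi, 0 < p phi -> consistent phi (Psi phi).

Lemma tower_weight phi' : \sum_phi p phi * condp p phi' (Psi phi) = p phi'.
Proof.
case: (p_cases phi') => pos'.
  rewrite pos' big1 // => phi _; rewrite /condp; case: ifP => _; last by rewrite mulr0.
  by rewrite pos' mul0r mulr0.
have prob_pos := prob_gt0 (Psi_consistent pos') pos'.
transitivity (\sum_phi (if consistent phi (Psi phi') then p phi else 0) *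
                (p phi' / prob p (Psi phi'))).
  apply: eq_bigr => phi _; case: (p_cases phi) => pos.
    by rewrite pos mul0r; case: ifP => _; rewrite mul0r.
  rewrite /condp; case: ifP => cons.
    by rewrite (Psi_determined pos pos' cons) (Psi_consistent pos).
  case: ifP => cons'; last by rewrite !mul0r mulr0.
  by rewrite (Psi_determined pos' pos cons') (Psi_consistent pos') in cons.
rewrite -mulr_suml -big_mkcond /= -/(prob p (Psi phi')).
by rewrite mulrCA divff ?mulr1 // lt0r_neq0.
Qed.

Lemma tower (X : Real -> R) :
  Ep X = Ep (fun phi => \sum_phi' condp p phi' (Psi phi) * X phi').
Proof.
rewrite /Ep; under [RHS]eq_bigr => phi _ do rewrite mulr_sumr.
rewrite exchange_big /=; apply: eq_bigr => phi' _.
by rewrite -(tower_weight phi') mulr_suml; apply: eq_bigr => phi _; rewrite mulrA.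
Qed.

End Tower.
End Prior.

Section Utility.
Variables (R : realType) (E O : finType).
Variables (p : {ffun E -> O} -> R) (f : {set E} -> {ffun E -> O} -> R).
Hypothesis p_ge0 : forall phi, 0 <= p phi.
Hypothesis md : minimal_dependency p f.
Hypothesis wmono : wc_monotone p f.
Local Notation Real := {ffun E -> O}.
Local Notation Obs := {ffun E -> option O}.

Lemma fexp_consistent phi (psi : Obs) : consistent phi psi -> 0 < p phi ->
  fexp p f (pdom psi) psi = f (pdom psi) phi.
Proof. by move=> cons pos; apply: md (prob_gt0 p_ge0 cons pos) pos cons. Qed.

Lemma fwc_le_marginal phi (psi : Obs) e : consistent phi psi -> 0 < p phi ->
  fwc_marg p f e psi <= f (pdom psi :|: [set e]) phi - f (pdom psi) phi.
Proof.
move=> cons pos; apply: le_trans (min_over_le _ (Oset_mem p_ge0 e cons pos)) _.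
have cons' := consistent_extend e cons.
by rewrite -(pdom_extend psi e (phi e)) (fexp_consistent cons' pos) (fexp_consistent cons pos).
Qed.

(* Adding one item never decreases [f]: its realized marginal utility is at
   least the worst-case one, which is nonnegative. *)
Lemma f_monotone1 phi A e : 0 < p phi -> f A phi <= f (A :|: [set e]) phi.
Proof.
move=> pos; case: (boolP (e \in A)) => eA; first by rewrite (setUidPl _) // sub1set.
have cons := consistent_restrict phi A.
have wc_ge0 : 0 <= fwc_marg p f e (restrict phi A).
  by apply: wmono; rewrite ?pdom_restrict // (prob_gt0 p_ge0 cons pos).
have := le_trans wc_ge0 (fwc_le_marginal e cons pos).
by rewrite pdom_restrict subr_ge0.
Qed.

Lemma f_monotone phi (A B : {set E}) : 0 < p phi -> A \subset B -> f A phi <= f B phi.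
Proof.
move=> pos /setUidPr <-; have [n] := ubnP #|B|; elim: n B => // n IH B.
rewrite ltnS => le_Bn; case: (set_0Vmem B) => [->|[x Bx]]; first by rewrite setU0.
rewrite -(setD1K Bx) setUCA setUC; apply: le_trans (f_monotone1 _ x pos).
by apply: IH; rewrite (cardsD1 x B) Bx in le_Bn.
Qed.

Lemma favg_ge0 e (psi : Obs) : 0 <= favg_marg p f e psi.
Proof.
apply: sumr_ge0 => phi _; case: (eqVneq (condp p phi psi) 0) => [->|nz].
  by rewrite mul0r.
have [_ pos] := condp_support p_ge0 nz.
by rewrite mulr_ge0 ?condp_ge0 // subr_ge0 f_monotone1.
Qed.

Lemma favg_observed e (psi : Obs) : e \in pdom psi -> favg_marg p f e psi = 0.
Proof.
move=> e_obs; rewrite /favg_marg (setUidPl _) ?sub1set //.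
by rewrite big1 // => phi _; rewrite subrr mulr0.
Qed.

Lemma expected_step (Psi : Real -> Obs) (nx : Real -> option E) :
  (forall phi phi', 0 < p phi -> 0 < p phi' ->
     consistent phi' (Psi phi) -> Psi phi' = Psi phi /\ nx phi' = nx phi) ->
  (forall phi, 0 < p phi -> consistent phi (Psi phi)) ->
  Ep p (fun phi => f (pdom (Psi phi) :|: oset (nx phi)) phi - f (pdom (Psi phi)) phi) =
  Ep p (fun phi => oapp (fun e => favg_marg p f e (Psi phi)) 0 (nx phi)).
Proof.
move=> determined Psi_cons.
have Psi_det phi phi' pos pos' cons := (determined phi phi' pos pos' cons).1.
rewrite (tower p_ge0 Psi_det Psi_cons); apply: (Ep_eq p_ge0) => phi pos.
transitivity (\sum_phi' condp p phi' (Psi phi) *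
  (f (pdom (Psi phi) :|: oset (nx phi)) phi' - f (pdom (Psi phi)) phi')).
  apply: eq_bigr => phi' _; case: (eqVneq (condp p phi' (Psi phi)) 0) => [->|nz].
    by rewrite !mul0r.
  have [cons pos'] := condp_support p_ge0 nz.
  by have [-> ->] := determined _ _ pos pos' cons.
case: (nx phi) => [e|] //=.
by rewrite setU0 big1 // => phi' _; rewrite subrr mulr0.
Qed.

End Utility.

(* Each item [e] of an
   independent set [A] lies in a block [Ez z]; round [z] lasts [c z >= g0 * k z]
   steps, and at each of them the step value [g t] dominates [w e].  Since at
   most [k z] items of [A] lie in block [z], the total step value of round [z]
   pays for [g0] times the weight of those items. *)
Section ScheduleRatio.
Variables (R : realType) (E : finType) (b : nat).
Variables (Ez : 'I_b -> {set E}) (k c : 'I_b -> nat) (z0 : 'I_b) (g0 : R).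
Hypothesis cover : forall e : E, exists z : 'I_b, e \in Ez z.
Hypothesis k_gt0 : forall z, (0 < k z)%N.
Hypothesis g0_gt0 : 0 < g0.
Hypothesis round_length : forall z, g0 * (k z)%:R <= (c z)%:R.
Local Notation N := (size (schedule c)).

(* A block containing [e]. *)
Definition block (e : E) : 'I_b := odflt z0 [pick z | e \in Ez z].

Lemma block_mem e : e \in Ez (block e).
Proof.
rewrite /block; case: pickP => [z //|none].
by have [z ez] := cover e; rewrite none in ez.
Qed.

Lemma in_matroid_subset (A B : {set E}) :
  A \subset B -> in_matroid Ez k B -> in_matroid Ez k A.
Proof.
move=> subAB /forallP indepB; apply/forallP => z.
by apply: leq_trans (indepB z); apply/subset_leq_card/setSI.
Qed.

Lemma schedule_ratio (A : {set E}) (w : E -> R) (g : nat -> R) :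
  in_matroid Ez k A -> (forall t, (t < N)%N -> 0 <= g t) ->
  (forall e t, e \in A -> (t < N)%N -> e \in Ez (nth z0 (schedule c) t) -> w e <= g t) ->
  g0 * \sum_(e in A) w e <= \sum_(t < N) g t.
Proof.
move=> /forallP indep g_ge0 w_le_g.
rewrite (partition_big block predT) //=.
rewrite (partition_big (fun t : 'I_N => nth z0 (schedule c) t) predT) //= mulr_sumr.
apply: ler_sum => z _.
set Wz := \sum_(e in A | _) _; set Gz := \sum_(t < N | _) _.
have Gz_ge0 : 0 <= Gz by apply: sumr_ge0 => t _; apply: g_ge0.
(* each item of block [z] is paid for by every step of round [z] *)
have round_pays : (c z)%:R * Wz <= (k z)%:R * Gz.
  rewrite /Wz mulr_sumr; apply: le_trans (_ : \sum_(e in A | block e == z) Gz <= _).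
    apply: ler_sum => e /andP [eA /eqP ez].
    rewrite -(schedule_count c z z0) mulr_natl -sumr_const.
    apply: ler_sum => t /eqP tz; apply: w_le_g => //.
    by rewrite tz -ez block_mem.
  rewrite sumr_const -[Gz *+ _]mulr_natl ler_wpM2r // ler_nat.
  apply: leq_trans (indep z); apply: subset_leq_card; apply/subsetP => e.
  by rewrite !inE => /andP [-> /eqP <-]; rewrite block_mem.
have kz_gt0 : (0 : R) < (k z)%:R by rewrite ltr0n.
case: (lerP 0 Wz) => [Wz_ge0|Wz_lt0]; last by rewrite (le_trans _ Gz_ge0) // pmulr_rle0 // ltW.
rewrite -(ler_pM2l kz_gt0) mulrA [_ * g0]mulrC.
by apply: le_trans round_pays; rewrite ler_wpM2r.
Qed.

End ScheduleRatio.

Section GreedyRun.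
Variables (R : realType) (E O : finType) (p : {ffun E -> O} -> R).
Variables (b : nat) (Ez : 'I_b -> {set E}) (c : 'I_b -> nat).
Variables (score : E -> {ffun E -> option O} -> R) (pi : policy E O).
Hypothesis greedy : greedy_policy p Ez c score pi.
Variable z0 : 'I_b.
Local Notation N := (size (schedule c)).

Definition final_obs phi := obs_after pi phi N.

Definition gain phi t : R :=
  oapp (fun e => score e (obs_after pi phi t)) 0 (pi (obs_after pi phi t)).

Lemma greedy_step phi t : 0 < p phi -> (t < N)%N ->
  exists2 e, pi (obs_after pi phi t) = Some e &
   [/\ e \in Ez (nth z0 (schedule c) t), e \notin pdom (obs_after pi phi t) &
       forall e', e' \in Ez (nth z0 (schedule c) t) ->
         e' \notin pdom (obs_after pi phi t) ->
         score e' (obs_after pi phi t) <= score e (obs_after pi phi t)].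
Proof. by move=> pos lt_tN; have [step _] := greedy pos; apply: step. Qed.

(* Every step selects a new item, so the run has exactly [N] items. *)
Lemma greedy_card phi t : 0 < p phi -> (t <= N)%N -> #|pdom (obs_after pi phi t)| = t.
Proof.
move=> pos; elim: t => [|t IH] lt_tN; first by rewrite pdom_empty cards0.
have [e sel [_ new _]] := greedy_step pos lt_tN.
by rewrite obs_afterS pdom_pstep sel /= setUC cardsU1 new IH // ltnW.
Qed.

Lemma greedy_selected phi : 0 < p phi -> selected pi phi = pdom (final_obs phi).
Proof.
move=> pos; have le_NE : (N <= #|E|)%N by rewrite -(greedy_card pos (leqnn N)) max_card.
rewrite /selected /final_obs -(subnK le_NE); congr pdom.
elim: (#|E| - N)%N => [|n IH] //.
by rewrite addSn obs_afterS IH /pstep; have [_ ->] := greedy pos.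
Qed.

(* The greedy scores are bounded by a counting argument, provided the score is
   nonnegative on new items and can only decrease as observations grow -- the
   shape of both worst-case and adaptive submodularity. *)
Variables (k : 'I_b -> nat) (g0 : R).
Hypothesis cover : forall e : E, exists z : 'I_b, e \in Ez z.
Hypothesis k_gt0 : forall z, (0 < k z)%N.
Hypothesis g0_gt0 : 0 < g0.
Hypothesis round_length : forall z, g0 * (k z)%:R <= (c z)%:R.
Hypothesis p_ge0 : forall phi, 0 <= p phi.
Hypothesis score_ge0 : forall psi e,
  0 < prob p psi -> e \notin pdom psi -> 0 <= score e psi.
Hypothesis score_antitone : forall psi psi' e,
  0 < prob p psi -> 0 < prob p psi' -> subpr psi psi' ->
  e \notin pdom psi' -> score e psi' <= score e psi.

Lemma greedy_ratio phi (S A : {set E}) :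
  0 < p phi -> in_matroid Ez k S -> A \subset S :\: pdom (final_obs phi) ->
  g0 * \sum_(e in A) score e (final_obs phi) <= \sum_(t < N) gain phi t.
Proof.
move=> pos indepS subA.
have indepA : in_matroid Ez k A.
  by apply: (in_matroid_subset _ indepS); apply: subset_trans subA (subsetDl _ _).
apply: (schedule_ratio (z0 := z0) cover k_gt0 g0_gt0 round_length
          (w := fun e => score e (final_obs phi)) (g := gain phi) indepA).
  move=> t lt_tN; have [e sel [_ new _]] := greedy_step pos lt_tN.
  by rewrite /gain sel /= score_ge0 // (prob_gt0 p_ge0 (obs_consistent _ _ _) pos).
move=> e t eA lt_tN e_round; have [e' sel [_ _ best]] := greedy_step pos lt_tN.
have e_new : e \notin pdom (final_obs phi).
  by move: (subsetP subA e eA); rewrite inE => /andP [].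
have before_final : subpr (obs_after pi phi t) (final_obs phi).
  by apply: obs_after_mono; apply: ltnW.
rewrite /gain sel /=; apply: le_trans (best e e_round _).
  by apply: score_antitone; rewrite // (prob_gt0 p_ge0 (obs_consistent _ _ _) pos).
by apply: contra e_new; apply/subsetP/subpr_pdom.
Qed.

End GreedyRun.

(* Fix an observation [G] of positive probability.  Starting from
   [G], an adversary answers each query of a competitor policy [pi'] with the
   outcome already revealed if there is one, and otherwise with a worst outcome
   given everything revealed so far.  By worst-case submodularity each
   new item raises the conditional value by at most its worst-case marginal
   utility at [G]. *)
Section Adversary.
Variables (R : realType) (E O : finType).
Variables (p : {ffun E -> O} -> R) (f : {set E} -> {ffun E -> O} -> R).
Hypothesis p_ge0 : forall phi, 0 <= p phi.
Hypothesis md : minimal_dependency p f.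
Hypothesis wmono : wc_monotone p f.
Hypothesis wsub : wc_submodular p f.
Variable pi' : policy E O.
Variable G : {ffun E -> option O}.
Hypothesis G_pos : 0 < prob p G.
Local Notation Obs := {ffun E -> option O}.

Definition outcome_gain e (q : Obs) o :=
  fexp p f (pdom q :|: [set e]) (extend q e o) - fexp p f (pdom q) q.

Definition worst_outcome e (q : Obs) : option O :=
  [pick o in Oset p e q | outcome_gain e q o == fwc_marg p f e q].

(* The state is a pair (what [pi'] has seen, everything revealed so far). *)
Definition adv_step (st : Obs * Obs) : Obs * Obs :=
  let: (s, q) := st in
  match pi' s with
  | Some e => match (if q e is Some o then Some o else worst_outcome e q) with
              | Some o => (extend s e o, extend q e o)
              | None => st end
  | None => st end.

Definition adv t := iter t adv_step (empty_obs E O, G).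

Definition adv_invariant (st : Obs * Obs) : Prop :=
  [/\ 0 < prob p st.2, subpr st.1 st.2, subpr G st.2,
      pdom st.2 \subset pdom G :|: pdom st.1 &
      fexp p f (pdom st.2) st.2 <=
        fexp p f (pdom G) G + \sum_(e in pdom st.2 :\: pdom G) fwc_marg p f e G].

Lemma worst_outcome_some e (q : Obs) : 0 < prob p q ->
  exists2 o, worst_outcome e q = Some o &
    o \in Oset p e q /\ outcome_gain e q o = fwc_marg p f e q.
Proof.
move=> q_pos; have [phi [cons pos]] := prob_gt0_witness p_ge0 q_pos.
have [o o_in o_min] := min_over_attained (outcome_gain e q) (Oset_mem p_ge0 e cons pos).
rewrite /worst_outcome; case: pickP => [o' /andP [o'_in /eqP o'_min]|none].
  by exists o'.
by move: (none o); rewrite o_in /fwc_marg o_min eqxx.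
Qed.

Lemma adv_step_sub st : subpr st.2 (adv_step st).2.
Proof.
case: st => s q /=; case: (pi' s) => [e|]; last exact: subpr_refl.
case qe: (q e) => [o|]; first by rewrite /= (extend_observed qe) subpr_refl.
case: (worst_outcome e q) => [o|]; last exact: subpr_refl.
by apply: subpr_extend; rewrite in_pdom qe.
Qed.

(* Revealing a worst outcome at a new item [e] costs at most [fwc_marg e G]. *)
Lemma adv_step_new_item s q e o :
  adv_invariant (s, q) -> q e = None -> worst_outcome e q = Some o ->
  adv_invariant (extend s e o, extend q e o).
Proof.
move=> [/= q_pos sq Gq dom_q val_q] qe worst.
have [o' worst' [o_in o_gain]] := worst_outcome_some e q_pos.
move: worst'; rewrite worst => -[eq_o]; subst o'.
have e_new : e \notin pdom q by rewrite in_pdom qe.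
have eG : e \notin pdom G by apply: contra e_new; apply/subsetP/subpr_pdom.
split => /=.
- have [phi [cons pos <-]] := Oset_witness p_ge0 o_in.
  exact: (prob_gt0 p_ge0 (consistent_extend e cons) pos).
- exact: subpr_extend2.
- by apply: subpr_trans Gq _; apply: subpr_extend.
- by rewrite !pdom_extend setUA setSU.
- have -> : pdom (extend q e o) :\: pdom G = e |: (pdom q :\: pdom G).
    by rewrite pdom_extend setDUl setUC (setDidPl _) // disjoints1.
  rewrite big_setU1 /=; last by rewrite in_setD (negbTE e_new) andbF.
  have -> : fexp p f (pdom (extend q e o)) (extend q e o) =
            fexp p f (pdom q) q + fwc_marg p f e q.
    by rewrite -o_gain /outcome_gain pdom_extend addrC subrK.
  by rewrite addrCA [X in X <= _]addrC lerD // (wsub G_pos q_pos Gq e_new).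
Qed.

Lemma adv_step_invariant st : adv_invariant st -> adv_invariant (adv_step st).
Proof.
case: st => s q inv; have [/= q_pos sq Gq dom_q val_q] := inv.
rewrite /adv_step; case: (pi' s) => [e|] //; case qe: (q e) => [o|].
  rewrite (extend_observed qe); split => //=.
    apply/subprP => x o'; rewrite ffunE; case: eqP => [-> [<-] //|_].
    by move/subprP: sq; apply.
  by rewrite pdom_extend setUA (subset_trans dom_q) ?subsetUl.
have [o worst _] := worst_outcome_some e q_pos; rewrite worst.
exact: adv_step_new_item.
Qed.

Lemma adv_invariant_all t : adv_invariant (adv t).
Proof.
elim: t => [|t IH]; last exact: adv_step_invariant.
split => //=; [exact: empty_subpr | exact: subpr_refl | exact: subsetUl |].
by rewrite setDv big_set0 addr0.
Qed.

Lemma adv_mono t t' : (t <= t')%N -> subpr (adv t).2 (adv t').2.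
Proof.
move=> /subnK <-; elim: (t' - t)%N => [|n IH]; first exact: subpr_refl.
by apply: subpr_trans IH _; rewrite addSn; apply: adv_step_sub.
Qed.

Lemma adv_obs phi' T : consistent phi' (adv T).2 ->
  forall t, (t <= T)%N -> obs_after pi' phi' t = (adv t).1.
Proof.
move=> consT; elim => [|t IH] lt_tT //.
rewrite obs_afterS IH ?(ltnW lt_tT) //.
have cons : consistent phi' (adv t.+1).2 := consistent_subpr (adv_mono lt_tT) consT.
have [q_pos _ _ _ _] := adv_invariant_all t.
rewrite /pstep /adv iterS -/(adv t) in cons *.
move: cons q_pos; case: (adv t) => s q /= cons q_pos.
case: (pi' s) cons => [e|] // cons; case qe: (q e) cons => [o|] cons.
  by rewrite (consistent_extend_val cons).
have [o worst _] := worst_outcome_some e q_pos.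
by move: cons; rewrite worst => cons; rewrite (consistent_extend_val cons).
Qed.

Lemma adversary_bound phi : consistent phi G -> 0 < p phi ->
  exists2 phi', 0 < p phi' &
    exists2 A : {set E}, A \subset selected pi' phi' :\: pdom G &
      f (selected pi' phi') phi' <= f (pdom G) phi + \sum_(e in A) fwc_marg p f e G.
Proof.
move=> cons pos; have [qT_pos s_q _ dom_q val_q] := adv_invariant_all #|E|.
have [phi' [cons' pos']] := prob_gt0_witness p_ge0 qT_pos.
have sel : selected pi' phi' = pdom (adv #|E|).1 by rewrite /selected (adv_obs cons').
exists phi' => //; exists (pdom (adv #|E|).2 :\: pdom G).
  apply/subsetP => x; rewrite sel !in_setD => /andP [xG /(subsetP dom_q)].
  by rewrite in_setU (negbTE xG) /= => ->.
rewrite sel -(fexp_consistent p_ge0 md cons pos).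
apply: le_trans (f_monotone p_ge0 md wmono pos' (subpr_pdom s_q)) _.
by rewrite -(fexp_consistent p_ge0 md cons' pos').
Qed.

End Adversary.

Section WorstCaseGreedy.
Variables (R : realType) (E O : finType).
Variables (p : {ffun E -> O} -> R) (f : {set E} -> {ffun E -> O} -> R).
Hypothesis p_ge0 : forall phi, 0 <= p phi.
Hypothesis f_ge0 : forall S phi, 0 <= f S phi.
Hypothesis md : minimal_dependency p f.
Hypothesis wmono : wc_monotone p f.
Hypothesis wsub : wc_submodular p f.
Variables (b : nat) (Ez : 'I_b -> {set E}) (k c : 'I_b -> nat) (z0 : 'I_b) (g0 : R).
Hypothesis cover : forall e : E, exists z : 'I_b, e \in Ez z.
Hypothesis k_gt0 : forall z, (0 < k z)%N.
Hypothesis g0_gt0 : 0 < g0.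
Hypothesis round_length : forall z, g0 * (k z)%:R <= (c z)%:R.
Variable pim : policy E O.
Hypothesis greedy : greedy_policy p Ez c (fwc_marg p f) pim.
Local Notation N := (size (schedule c)).
Local Notation G phi := (final_obs c pim phi).

(* Worst-case marginal utilities underestimate realized ones, so the greedy
   scores add up to at most the final value. *)
Lemma wc_gains_le phi : 0 < p phi ->
  \sum_(t < N) gain (fwc_marg p f) pim phi t <= f (pdom (G phi)) phi.
Proof.
move=> pos.
apply: le_trans (_ : \sum_(t < N) (f (pdom (obs_after pim phi t.+1)) phi -
                                  f (pdom (obs_after pim phi t)) phi) <= _).
  apply: ler_sum => t _; have [e sel _] := greedy_step greedy z0 pos (ltn_ord t).
  rewrite /gain sel obs_afterS pdom_pstep sel /=.
  exact: (fwc_le_marginal p_ge0 md e (obs_consistent _ _ _) pos).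
rewrite -(big_mkord xpredT (fun t => f (pdom (obs_after pim phi t.+1)) phi -
                                     f (pdom (obs_after pim phi t)) phi)).
by rewrite telescope_sumr // pdom_empty gerDl oppr_le0.
Qed.

(* Combine the adversary bound at the final greedy observation with the
   counting argument and the bound on the greedy scores. *)
Lemma wc_greedy_guarantee pi' : feasible p Ez k pi' -> forall phi, 0 < p phi ->
  g0 * wc_value p f (selected pi') <= (g0 + 1) * f (selected pim phi) phi.
Proof.
move=> feas phi pos; rewrite (greedy_selected greedy z0 pos).
have cons : consistent phi (G phi) := obs_consistent _ _ _.
have [phi' pos' [A subA competitor]] :=
  adversary_bound p_ge0 md wmono wsub pi' (prob_gt0 p_ge0 cons pos) cons pos.
have ratio := greedy_ratio greedy z0 cover k_gt0 g0_gt0 round_length p_ge0 wmono wsub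
                pos (feas phi' pos') subA.
have wc_le : wc_value p f (selected pi') <= f (selected pi' phi') phi'.
  by apply: min_over_le; rewrite inE.
rewrite mulrDl mul1r; apply: le_trans (_ : g0 * (f (pdom (G phi)) phi +
   \sum_(e in A) fwc_marg p f e (G phi)) <= _).
  by rewrite ler_wpM2l ?(ltW g0_gt0) // (le_trans wc_le competitor).
by rewrite mulrDr lerD2l (le_trans ratio) // wc_gains_le.
Qed.

End WorstCaseGreedy.

(* Let [G phi] be the observation of a policy [pi0] after [n]
   steps and let a competitor [pi'] run on top of it.  By the tower property
   and adaptive submodularity, each step of [pi'] raises the expected value by
   at most the expected marginal utility, at [G], of the item it adds. *)
Section AverageCompetitor.
Variables (R : realType) (E O : finType).
Variables (p : {ffun E -> O} -> R) (f : {set E} -> {ffun E -> O} -> R).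
Hypothesis p_ge0 : forall phi, 0 <= p phi.
Hypothesis md : minimal_dependency p f.
Hypothesis wmono : wc_monotone p f.
Hypothesis asub : adaptive_submodular p f.
Variables (pi0 : policy E O) (n : nat) (pi' : policy E O).
Local Notation G phi := (obs_after pi0 phi n).

Definition joint_obs i phi := join (G phi) (obs_after pi' phi i).

Definition added_value phi i : R :=
  \sum_(e in pdom (joint_obs i phi) :\: pdom (G phi)) favg_marg p f e (G phi).

Lemma joint_consistent i phi : consistent phi (joint_obs i phi).
Proof. by apply: consistent_join; apply: obs_consistent. Qed.

Lemma joint_determined i phi phi' : consistent phi' (joint_obs i phi) ->
  joint_obs i phi' = joint_obs i phi /\
  pi' (obs_after pi' phi' i) = pi' (obs_after pi' phi i).
Proof.
move=> cons.
have [c0 c'] := consistent_join_inv (obs_consistent _ _ _) (obs_consistent _ _ _) cons.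
by rewrite /joint_obs (obs_after_determined c0) (obs_after_determined c').
Qed.

Lemma pdom_joint_step i phi :
  pdom (joint_obs i.+1 phi) = pdom (joint_obs i phi) :|: oset (pi' (obs_after pi' phi i)).
Proof. by rewrite /joint_obs !pdom_join obs_afterS pdom_pstep setUA. Qed.

(* One step of [pi']: by the tower property its expected gain is the expected
   marginal utility given the joint observation, which adaptive submodularity
   bounds by the one given [G] (and which vanishes on already known items). *)
Lemma avg_competitor_step i :
  Ep p (fun phi => f (pdom (joint_obs i.+1 phi)) phi - f (pdom (joint_obs i phi)) phi) <=
  Ep p (fun phi => added_value phi i.+1 - added_value phi i).
Proof.
rewrite (Ep_eq p_ge0 (Y := fun phi => f (pdom (joint_obs i phi) :|:
    oset (pi' (obs_after pi' phi i))) phi - f (pdom (joint_obs i phi)) phi)); last first.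
  by move=> phi _; rewrite pdom_joint_step.
rewrite (expected_step f p_ge0 (Psi := joint_obs i)
          (nx := fun phi => pi' (obs_after pi' phi i))); first last.
- by move=> phi _; apply: joint_consistent.
- by move=> phi phi' _ _; apply: joint_determined.
apply: (Ep_le p_ge0) => phi pos; rewrite /added_value pdom_joint_step.
case: (pi' _) => [e|] /=; last by rewrite setU0 subrr.
case: (boolP (e \in pdom (joint_obs i phi))) => e_obs.
  by rewrite favg_observed // (setUidPl _) ?sub1set // subrr.
have eG : e \notin pdom (G phi).
  by apply: contra e_obs; apply/subsetP/subpr_pdom/subpr_join.
rewrite setDUl [[set e] :\: _](setDidPl _) ?disjoints1 // setUC.
rewrite big_setU1 /=; last by rewrite in_setD (negbTE e_obs) andbF.
rewrite addrK.
apply: asub => //; last exact: subpr_join.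
- exact: (prob_gt0 p_ge0 (obs_consistent _ _ _) pos).
- exact: (prob_gt0 p_ge0 (joint_consistent i phi) pos).
Qed.

Lemma avg_competitor_bound :
  avg_value p f (selected pi') <=
  Ep p (fun phi => f (pdom (G phi)) phi +
    \sum_(e in selected pi' phi :\: pdom (G phi)) favg_marg p f e (G phi)).
Proof.
have pdom_joint0 phi : pdom (joint_obs 0 phi) = pdom (G phi).
  by rewrite /joint_obs pdom_join pdom_empty setU0.
have growth :
  Ep p (fun phi => f (pdom (joint_obs #|E| phi)) phi - f (pdom (joint_obs 0 phi)) phi) <=
  Ep p (fun phi => added_value phi #|E| - added_value phi 0).
  rewrite (Ep_telescope p (fun phi i => f (pdom (joint_obs i phi)) phi)).
  rewrite (Ep_telescope p added_value).
  by apply: ler_sum => i _; apply: avg_competitor_step.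
apply: le_trans (_ : Ep p (fun phi => f (pdom (joint_obs 0 phi)) phi +
   (f (pdom (joint_obs #|E| phi)) phi - f (pdom (joint_obs 0 phi)) phi)) <= _).
  apply: (Ep_le p_ge0) => phi pos; rewrite addrC subrK.
  by apply: (f_monotone p_ge0 md wmono pos); rewrite /joint_obs pdom_join subsetUr.
rewrite EpD [X in _ <= X]EpD lerD //.
  by apply: (Ep_le p_ge0) => phi _; rewrite pdom_joint0.
apply: le_trans growth _; apply: (Ep_le p_ge0) => phi _.
rewrite /added_value pdom_joint0 setDv big_set0 subr0.
by rewrite /joint_obs pdom_join setDUl setDv set0U.
Qed.

End AverageCompetitor.

Section AverageGreedy.
Variables (R : realType) (E O : finType).
Variables (p : {ffun E -> O} -> R) (f : {set E} -> {ffun E -> O} -> R).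
Hypothesis p_ge0 : forall phi, 0 <= p phi.
Hypothesis f_ge0 : forall S phi, 0 <= f S phi.
Hypothesis md : minimal_dependency p f.
Hypothesis wmono : wc_monotone p f.
Hypothesis asub : adaptive_submodular p f.
Variables (b : nat) (Ez : 'I_b -> {set E}) (k c : 'I_b -> nat) (z0 : 'I_b) (g0 : R).
Hypothesis cover : forall e : E, exists z : 'I_b, e \in Ez z.
Hypothesis k_gt0 : forall z, (0 < k z)%N.
Hypothesis g0_gt0 : 0 < g0.
Hypothesis round_length : forall z, g0 * (k z)%:R <= (c z)%:R.
Variable pim : policy E O.
Hypothesis greedy : greedy_policy p Ez c (favg_marg p f) pim.
Local Notation N := (size (schedule c)).
Local Notation G phi := (final_obs c pim phi).

(* By the tower property the expected greedy score of each step is the expected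
   increase of [f], so the expected scores add up to at most the final value. *)
Lemma avg_gains_le :
  Ep p (fun phi => \sum_(t < N) gain (favg_marg p f) pim phi t) <=
  Ep p (fun phi => f (pdom (G phi)) phi).
Proof.
have step_value t : Ep p (fun phi => gain (favg_marg p f) pim phi t) =
    Ep p (fun phi => f (pdom (obs_after pim phi t.+1)) phi - f (pdom (obs_after pim phi t)) phi).
  symmetry; rewrite (Ep_eq p_ge0 (Y := fun phi => f (pdom (obs_after pim phi t) :|:
      oset (pim (obs_after pim phi t))) phi - f (pdom (obs_after pim phi t)) phi)).
    apply: (expected_step f p_ge0 (Psi := fun phi => obs_after pim phi t)
             (nx := fun phi => pim (obs_after pim phi t))).
      by move=> phi phi' _ _ cons; rewrite (obs_after_determined cons).
    by move=> phi _; apply: obs_consistent.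
  by move=> phi _; rewrite obs_afterS pdom_pstep.
rewrite Ep_sum; under eq_bigr => t _ do rewrite step_value.
rewrite -(Ep_telescope p (fun phi t => f (pdom (obs_after pim phi t)) phi)).
by apply: (Ep_le p_ge0) => phi _; rewrite gerDl oppr_le0.
Qed.

(* Pointwise counting argument, then the bounds in expectation. *)
Lemma avg_greedy_guarantee pi' : feasible p Ez k pi' ->
  g0 * avg_value p f (selected pi') <= (g0 + 1) * avg_value p f (selected pim).
Proof.
move=> feas.
have -> : avg_value p f (selected pim) = Ep p (fun phi => f (pdom (G phi)) phi).
  by apply: (Ep_eq p_ge0) => phi pos; rewrite (greedy_selected greedy z0 pos).
have ratio : Ep p (fun phi => g0 *
    \sum_(e in selected pi' phi :\: pdom (G phi)) favg_marg p f e (G phi)) <=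
  Ep p (fun phi => \sum_(t < N) gain (favg_marg p f) pim phi t).
  apply: (Ep_le p_ge0) => phi pos.
  apply: (greedy_ratio greedy z0 cover k_gt0 g0_gt0 round_length p_ge0) => //.
  - by move=> psi e _ _; apply: favg_ge0.
  - exact: feas.
apply: le_trans (_ : g0 * Ep p (fun phi => f (pdom (G phi)) phi +
    \sum_(e in selected pi' phi :\: pdom (G phi)) favg_marg p f e (G phi)) <= _).
  by rewrite ler_wpM2l ?(ltW g0_gt0) // avg_competitor_bound.
rewrite EpD mulrDr mulrDl mul1r lerD2l -EpZ.
exact: le_trans ratio avg_gains_le.
Qed.

End AverageGreedy.

Section Gamma.
Variables (R : realType) (b : nat) (k : 'I_b -> nat).
Hypothesis k_gt1 : forall z, (1 < k z)%N.

Lemma gamma_gt0 : 0 < gamma R k.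
Proof.
apply: (big_ind (fun x : R => 0 < x)) => // [x y x_gt0 y_gt0|z _].
  by rewrite lt_min x_gt0 y_gt0.
by rewrite divr_gt0 // ltr0n ?half_gt0 // ltnW.
Qed.

Lemma gamma_half z : gamma R k * (k z)%:R <= ((k z)./2)%:R.
Proof.
rewrite -ler_pdivlMr ?ltr0n ?(ltnW (k_gt1 z)) //.
by rewrite /gamma (bigD1 z) //= ge_min lexx.
Qed.

Lemma gamma_uphalf z : gamma R k * (k z)%:R <= (uphalf (k z))%:R.
Proof. by rewrite (le_trans (gamma_half z)) // ler_nat uphalf_half leq_addl. Qed.

End Gamma.

Lemma prior_support (R : realType) (E O : finType) (p : {ffun E -> O} -> R) :
  is_prior p -> exists phi, 0 < p phi.
Proof.
move=> [p_ge0 p_sum]; case: (boolP [exists phi, 0 < p phi]) => [/existsP //|/existsPn none].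
move: p_sum; rewrite big1 => [/eqP|phi _]; first by rewrite eq_sym oner_eq0.
by case: (p_cases p_ge0 phi) => // pos; move: (none phi); rewrite pos.
Qed.

Lemma robust_ratio (R : realType) (g V' V : R) :
  0 < g -> g * V' <= (g + 1) * V -> g / (g + 1) * V' <= V.
Proof.
move=> g_gt0 le_V; have g1_gt0 : 0 < g + 1 by rewrite addr_gt0.
by rewrite mulrAC ler_pdivrMr // [V * _]mulrC.
Qed.

Theorem theorem5 (R : realType) (E O : finType)
    (p : {ffun E -> O} -> R) (f : {set E} -> {ffun E -> O} -> R)
    (b : nat) (Ez : 'I_b -> {set E}) (k : 'I_b -> nat)
    (pi_mw pi_ma : policy E O) :
  is_prior p ->
  (0 < b)%N ->
  (forall z1 z2 : 'I_b, z1 != z2 -> [disjoint Ez z1 & Ez z2]) ->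
  (forall e : E, exists z : 'I_b, e \in Ez z) ->
  (forall z : 'I_b, 2 <= k z <= #|Ez z|)%N ->
  (forall S phi, 0 <= f S phi) ->
  wc_monotone p f -> wc_submodular p f ->
  adaptive_submodular p f -> minimal_dependency p f ->
  is_pi_mw p f Ez k pi_mw -> is_pi_ma p f Ez k pi_ma ->
  forall pi' : policy E O, feasible p Ez k pi' ->
    gamma R k / (gamma R k + 1) * wc_value p f (selected pi')
      <= wc_value p f (concat_selected pi_mw pi_ma)
    /\
    gamma R k / (gamma R k + 1) * avg_value p f (selected pi')
      <= avg_value p f (concat_selected pi_mw pi_ma).
Proof.
move=> prior b_gt0 _ cover k_range f_ge0 wmono wsub asub md mw ma pi' feas.
have [p_ge0 _] := prior; pose z0 := Ordinal b_gt0.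
have k_gt1 z : (1 < k z)%N by case/andP: (k_range z).
have k_gt0 z : (0 < k z)%N := ltnW (k_gt1 z).
have g_gt0 := gamma_gt0 R k_gt1.
have g1_ge0 : 0 <= gamma R k + 1 by rewrite ltW ?addr_gt0.
split.
- (* worst case: at each realization, pi^m does at least as well as pi^mw *)
  have [phi0 pos0] := prior_support prior.
  apply: (min_over_ge _ (x := phi0)) => [|phi]; rewrite inE // => pos.
  apply: (robust_ratio g_gt0).
  apply: le_trans (wc_greedy_guarantee p_ge0 f_ge0 md wmono wsub z0 cover k_gt0 g_gt0
                     (gamma_half R k_gt1) mw feas pos) _.
  by rewrite ler_wpM2l // (f_monotone p_ge0 md wmono pos) ?subsetUl.
- (* average case: pi^m does at least as well as pi^ma *)
  apply: (robust_ratio g_gt0).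
  apply: le_trans (avg_greedy_guarantee p_ge0 f_ge0 md wmono asub z0 cover k_gt0 g_gt0
                     (gamma_uphalf R k_gt1) ma feas) _.
  rewrite ler_wpM2l //; apply: (Ep_le p_ge0) => phi pos.
  by rewrite (f_monotone p_ge0 md wmono pos) ?subsetUr.
Qed.
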